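(* Let $\frac{A}{B}\in \mathcal{F}_n(k)$ and $u\in k^\times$. Then the Bézout form of $\frac{X}{u} \oplus^{\mathrm{N}} \frac{A}{B}$ is conjugate by an element of $\mathbf{SL}_{n+1}(k)$ to the block diagonal form $\langle u \rangle \oplus \mathrm{B\acute{e}z}_n(A,B)$.
   Context: Let $k$ be a field. $\mathcal{F}_n(k)$ is the set of pointed degree $n$ rational functions $\frac AB$: $A\in k[X]$ monic of degree $n$, $\deg B<n$, $\mathrm{res}_{n,n}(A,B)\neq0$, with unique Bézout relation $AU+BV=1$ ($\deg U\leq n-2$, $\deg V\leq n-1$). The law $\oplus^{\mathrm{N}}$: $\frac{A_1}{B_1}\oplus^{\mathrm{N}}\frac{A_2}{B_2}=\frac{A_3}{B_3}$ with $\begin{bmatrix}A_3 & -V_3\\ B_3 & U_3\end{bmatrix} = \begin{bmatrix}A_1 & -V_1\\ B_1 & U_1\end{bmatrix}\begin{bmatrix}A_2 & -V_2\\ B_2 & U_2\end{bmatrix}$; in particular $\frac{X}{u}\oplus^{\mathrm{N}}\frac AB=\frac{XA-B/u}{uA}$. The Bézout form $\mathrm{B\acute{e}z}_n(A,B)$ is the symmetric bilinear form on $k^n$ with Gram matrix $[c_{p,q}]_{1\le p,q\le n}$ where $\frac{A(X)B(Y)-A(Y)B(X)}{X-Y}=\sum c_{p,q}X^{p-1}Y^{q-1}$. $\langle u\rangle$ is the rank one form with Gram matrix $(u)$. *)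

From mathcomp Require Import all_boot all_algebra.
Set Implicit Arguments. Unset Strict Implicit. Unset Printing Implicit Defensive.
Import GRing.Theory.
Local Open Scope ring_scope.

(* Rows 0..n-1 hold the
   coefficients of X^i * A, rows n..2n-1 those of X^(i-n) * B.
   (Any other row/column ordering convention only changes the sign.) *)
Definition sylvester_nn (k : fieldType) (n : nat) (A B : {poly k}) : 'M[k]_(n + n) :=
  \matrix_(i < n + n, j < n + n)
     (if (i < n)%N then ('X^i * A)`_j else ('X^(i - n) * B)`_j).

Definition res_nn (k : fieldType) (n : nat) (A B : {poly k}) : k :=
  \det (sylvester_nn n A B).

Definition in_Fn (k : fieldType) (n : nat) (A B : {poly k}) : Prop :=
  [/\ A \is monic, size A = n.+1, (size B <= n)%N & res_nn n A B != 0].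

(* Bezout form Bez_n(A,B): Gram matrix [c_{p,q}] where
   (A(X)B(Y) - A(Y)B(X)) / (X - Y) = sum c_{p,q} X^(p-1) Y^(q-1).
   Bivariate polynomials are {poly {poly k}}: the inner variable is X
   (p%:P embeds p(X)), the outer variable is Y (p^:P embeds p(Y)). *)
Definition bezout_quot (k : fieldType) (A B : {poly k}) : {poly {poly k}} :=
  (A%:P * B^:P - A^:P * B%:P) %/ ('X%:P - 'X).

Definition bezout_mx (k : fieldType) (n : nat) (A B : {poly k}) : 'M[k]_n :=
  \matrix_(p < n, q < n) ((bezout_quot A B)`_q)`_p.

(* X/u (+)^N A/B = (X A - B/u) / (u A), given as a (numerator, denominator) pair. *)
Definition oplusN_Xu (k : fieldType) (u : k) (A B : {poly k}) : {poly k} * {poly k} :=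
  ('X * A - u^-1 *: B, u *: A).

From mathcomp Require Import all_boot all_algebra ring.
Import GRing.Theory.
Local Open Scope ring_scope.

(* The Bezout quotient of X/u (+)^N A/B is q(X,Y) + u A(X) A(Y), where q is the
   Bezout quotient of (A, B): the cross terms in B/u cancel.  Hence its Gram matrix
   is Q + u a^T a, with a the coefficient row of A and Q the symmetric matrix
   Bez_n(A,B) bordered by a zero last row and column (q has degree < n in Y, as
   deg A, deg B <= n).  Take P with first column +-e_n and other columns
   e_j - a_j e_n.  Since A is monic, a P = (+-1, 0, ..., 0), while Q e_n = 0 makes
   P^T Q P = 0 (+) Bez_n(A,B); so P^T (Q + u a^T a) P = <u> (+) Bez_n(A,B), and the
   sign of the first column makes det P = 1. *)

Section BezoutForm.
Context {k : fieldType}.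
Implicit Types A B : {poly k}.

Definition bezout_num A B : {poly {poly k}} := A%:P * B^:P - A^:P * B%:P.

Lemma bezout_quot_unique A B q :
  bezout_num A B = q * ('Y - 'X) -> bezout_quot A B = q.
Proof.
have unit_lc : lead_coef ('Y - 'X : {poly {poly k}}) \is a GRing.unit.
  by rewrite -opprB lead_coefN lead_coefXsubC unitrN unitr1.
by move=> Nq; rewrite /bezout_quot -/(bezout_num A B) Nq Pdiv.IdomainUnit.mulpK.
Qed.

Lemma bezout_quotE A B : bezout_num A B = bezout_quot A B * ('Y - 'X).
Proof.
have /factor_theorem [q Nq] : root (bezout_num A B) 'X.
  by rewrite /root !hornerE -!/(comp_poly _ _) !comp_polyXr mulrC subrr.
by rewrite (@bezout_quot_unique _ _ (- q)) // Nq mulNr -mulrN opprB.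
Qed.

Lemma swapXY_bezout_quot A B : swapXY (bezout_quot A B) = bezout_quot A B.
Proof.
have swapN : swapXY (bezout_num A B) = - bezout_num A B.
  by rewrite rmorphB !rmorphM /= !swapXY_polyC !swapXY_map_polyC opprB.
apply/esym/bezout_quot_unique.
by rewrite -[LHS]opprK -swapN bezout_quotE rmorphM rmorphB /= swapXY_X swapXY_Y -mulrN opprB.
Qed.

Lemma size_bezout_quot n A B :
  (size A <= n.+1)%N -> (size B <= n.+1)%N -> (size (bezout_quot A B) <= n)%N.
Proof.
move=> szA szB; set q := bezout_quot A B.
have [-> | nz_q] := eqVneq q 0; first by rewrite size_poly0.
have size_XmulY (p r : {poly k}) : (size (p%:P * r^:P)%R <= size r)%N.
  by rewrite mul_polyC (leq_trans (size_scale_leq _ _)) ?size_map_polyC.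
have : (size (bezout_num A B) <= n.+1)%N.
  rewrite (leq_trans (size_polyD _ _)) // size_polyN geq_max.
  by rewrite (leq_trans (size_XmulY _ _)) // mulrC (leq_trans (size_XmulY _ _)).
have size_YX : size ('Y - 'X : {poly {poly k}}) = 2.
  by rewrite -opprB size_polyN size_XsubC.
rewrite bezout_quotE -/q size_mul ?size_YX ?addn2 //.
by rewrite -size_poly_eq0 size_YX.
Qed.

Lemma bezout_quot_oplusN A B u : u != 0 ->
  bezout_quot (oplusN_Xu u A B).1 (oplusN_Xu u A B).2 =
  bezout_quot A B + (u *: A)%:P * A^:P.
Proof.
move=> nz_u; apply: bezout_quot_unique.
rewrite mulrDl -bezout_quotE /bezout_num /= -!mul_polyC.
rewrite !rmorphB !rmorphM /= !map_polyC /= map_polyX.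
set uu := (u%:P)%:P; set vv := (u^-1%:P)%:P.
(* [ring] knows nothing of [u^-1 * u = 1], so that relation is inserted by hand. *)
have uuK : uu * vv = 1 by rewrite /uu /vv -!polyCM mulfV.
rewrite -[_ - _ in RHS]mul1r -uuK.
ring.
Qed.

Lemma bezout_mx_sym m A B : (bezout_mx m A B)^T = bezout_mx m A B.
Proof.
by apply/matrixP=> i j; rewrite !mxE -[in RHS](swapXY_bezout_quot A B) coef_swapXY.
Qed.

Lemma bezout_mx_oplusN m A B u : u != 0 ->
  bezout_mx m (oplusN_Xu u A B).1 (oplusN_Xu u A B).2 =
  bezout_mx m A B + u *: ((poly_rV A : 'rV_m)^T *m poly_rV A).
Proof.
move=> nz_u; apply/matrixP=> i j.
rewrite !mxE bezout_quot_oplusN // big_ord1 !mxE coefD coefD coefCM coef_map /=.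
by rewrite coefMC coefZ mulrA.
Qed.

Lemma mxsub_bezout_mx n A B :
  mxsub (lift ord_max) (lift ord_max) (bezout_mx n.+1 A B) = bezout_mx n A B.
Proof. by apply/matrixP=> i j; rewrite !mxE !lift_max. Qed.

Lemma bezout_mx_col_max n A B :
  (size A <= n.+1)%N -> (size B <= n.+1)%N ->
  bezout_mx n.+1 A B *m (delta_mx ord_max 0 : 'cV_n.+1) = 0.
Proof.
move=> szA szB; apply/matrixP=> i j.
have q_n : (bezout_quot A B)`_n = 0 := nth_default _ (size_bezout_quot _ _ _ szA szB).
by rewrite -colE !mxE q_n coef0.
Qed.

End BezoutForm.

Section SymmetricCongruence.
Context {R : comRingType} {m : nat} {Q : 'M[R]_m}.
Hypothesis Q_sym : Q^T = Q.

Lemma trmx_mulmx_ker (e : 'cV_m) : Q *m e = 0 -> e^T *m Q = 0.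
Proof. by move=> Qe; rewrite -[Q]Q_sym -trmx_mul Qe trmx0. Qed.

Lemma congr_shear n (E : 'M_(m, n)) (e : 'cV_m) (v : 'rV_n) : Q *m e = 0 ->
  (E - e *m v)^T *m Q *m (E - e *m v) = E^T *m Q *m E.
Proof.
move=> /[dup] Qe /trmx_mulmx_ker eQ.
rewrite raddfB /= (mulmxA _ e) -(mulmxA _ Q e) Qe mulmx0 mul0mx subr0.
rewrite [(E - _)^T]raddfB /= trmx_mul !mulmxBl -(mulmxA v^T) eQ mulmx0 mul0mx.
by rewrite subr0.
Qed.

Lemma congr_rank_one_update s u n (p0 : 'cV_m) (P1 : 'M_(m, n)) (a : 'rV_m) :
  Q *m p0 = 0 -> a *m p0 = s%:M -> a *m P1 = 0 ->
  (row_mx p0 P1)^T *m (Q + u *: (a^T *m a)) *m row_mx p0 P1 =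
  block_mx (u * s ^+ 2)%:M 0 0 (P1^T *m Q *m P1).
Proof.
move=> /[dup] Qp0 /trmx_mulmx_ker p0Q ap0 aP1.
set P := row_mx p0 P1.
have rank_one : P^T *m (a^T *m a) *m P = block_mx (s ^+ 2)%:M 0 0 0.
  rewrite mulmxA -mulmxA -trmx_mul mul_mx_row ap0 aP1 tr_row_mx mul_col_row.
  by rewrite tr_scalar_mx -scalar_mxM mulmx0 raddf0 !mul0mx expr2.
have quadratic : P^T *m Q *m P = block_mx 0 0 0 (P1^T *m Q *m P1).
  by rewrite tr_row_mx mul_col_mx mul_col_row p0Q !mul0mx -mulmxA Qp0 mulmx0.
rewrite mulmxDr mulmxDl -scalemxAr -scalemxAl quadratic rank_one.
by rewrite scale_block_mx add_block_mx scale_scalar_mx !scaler0 !addr0 add0r mulrC.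
Qed.
End SymmetricCongruence.

Lemma colsub1_congr (R : comRingType) m n (f : 'I_n -> 'I_m) (Q : 'M[R]_m) :
  (colsub f 1%:M)^T *m Q *m colsub f 1%:M = mxsub f f Q.
Proof.
by rewrite trmx_mxsub tr_scalar_mx mul_rowsub_mx mul1mx mulmx_colsub mulmx1 [RHS]mxsubcr.
Qed.

Section ShearDeterminant.
Variables (R : comRingType) (n : nat).

Let e : 'cV[R]_(1 + n) := delta_mx ord_max 0.
Let E : 'M[R]_(1 + n, n) := colsub (lift ord_max) 1%:M.

Lemma det_row_mx_shear s (v : 'rV_n) :
  \det (row_mx (s *: e) (E - e *m v)) = s * (-1) ^+ n.
Proof.
set P := row_mx _ _.
have P_first i : P i (lshift n 0) = s * (i == ord_max)%:R.
  by rewrite row_mxEl !mxE eqxx andbT mulr_natr.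
have minor : row' ord_max (col' (lshift n 0) P) = 1%:M.
  apply/matrixP=> i j; rewrite [LHS]mxE [LHS]mxE.
  have -> : lift (lshift n 0) j = rshift 1 j by apply: val_inj.
  rewrite row_mxEr !mxE big_ord1 !mxE (inj_eq (@lift_inj _ _)).
  by rewrite [lift _ _ == _]eq_sym (negbTE (neq_lift _ _)) mul0r subr0.
rewrite (expand_det_col _ (lshift n 0)) (bigD1 ord_max) //= big1 => [|i neq_i].
  by rewrite addr0 P_first eqxx mulr1 /cofactor minor det1 mulr1 addn0.
by rewrite P_first (negbTE neq_i) mulr0 mul0r.
Qed.

End ShearDeterminant.

Theorem lemma3p15 (k : fieldType) (n : nat) (A B : {poly k}) (u : k) :
  in_Fn n A B -> u != 0 ->
  exists P : 'M[k]_(1 + n),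
    \det P = 1 /\
    P^T *m bezout_mx (1 + n) (oplusN_Xu u A B).1 (oplusN_Xu u A B).2 *m P
    = block_mx (u%:M : 'M[k]_1) 0 0 (bezout_mx n A B).
Proof.
case=> monA szA szB _ nz_u.
have A_n : A`_n = 1 by move/monicP: monA; rewrite lead_coefE szA.
set e : 'cV[k]_(1 + n) := delta_mx ord_max 0.
set E : 'M[k]_(1 + n, n) := colsub (lift ord_max) 1%:M.
set a : 'rV[k]_(1 + n) := poly_rV A.
set Q := bezout_mx (1 + n) A B.
have Qe : Q *m e = 0 by apply: bezout_mx_col_max; [rewrite szA | exact: leqW].
have ae : a *m e = 1%:M.
  by apply/matrixP=> i j; rewrite !ord1 -colE !mxE A_n.
have aE : a *m E = poly_rV A.
  by apply/matrixP=> i j; rewrite mulmx_colsub mulmx1 !mxE lift_max.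
exists (row_mx ((-1) ^+ n *: e) (E - e *m poly_rV A)); split.
  by rewrite det_row_mx_shear -expr2 sqrr_sign.
rewrite bezout_mx_oplusN // (congr_rank_one_update (bezout_mx_sym _ _ _) ((-1) ^+ n)).
- by rewrite sqrr_sign mulr1 congr_shear ?bezout_mx_sym // colsub1_congr mxsub_bezout_mx.
- by rewrite -scalemxAr Qe scaler0.
- by rewrite -scalemxAr ae scale_scalar_mx mulr1.
- by rewrite mulmxBr mulmxA ae mul1mx aE subrr.
Qed.
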